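(* Let $G$ be a connected graph of order $n\geq 9$ with minimum degree $\delta(G)\geq\frac{n-2}{2}$. Then $prc(G)=\chi'(G)$.
   Context: A path in an edge-coloured graph is a rainbow path if its edges receive pairwise distinct colours. The proper rainbow connection number $prc(G)$ of a connected graph is the minimum number of colours in a proper edge-colouring (adjacent edges get distinct colours) such that every two distinct vertices are joined by a rainbow path. $\chi'(G)$ is the chromatic index. *)

From mathcomp Require Import all_boot.
Set Implicit Arguments. Unset Strict Implicit. Unset Printing Implicit Defensive.

Section Graphs.
Variable T : finType.

Definition simple_graph (e : rel T) : Prop := symmetric e /\ irreflexive e.

Definition connected_graph (e : rel T) : Prop := forall x y : T, connect e x y.

Definition deg (e : rel T) (x : T) : nat := #|[set y | e x y]|.

(* An edge-colouring with colours in {0,...,k-1}: a map c on ordered pairs,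
   which is symmetric on edges (so it is a colouring of unordered edges). *)
Definition edge_colouring (e : rel T) (k : nat) (c : T -> T -> nat) : Prop :=
  forall x y, e x y -> c x y = c y x /\ c x y < k.

Definition proper_colouring (e : rel T) (k : nat) (c : T -> T -> nat) : Prop :=
  edge_colouring e k c /\
  forall x y z, e x y -> e x z -> y != z -> c x y != c x z.

Definition rainbow_path (e : rel T) (c : T -> T -> nat) (u v : T) (p : seq T) : bool :=
  [&& path e u p, last u p == v, uniq (u :: p) & uniq (pairmap c u p)].

Definition rainbow_connected (e : rel T) (c : T -> T -> nat) : Prop :=
  forall u v, u != v -> exists p, rainbow_path e c u v p.

Definition proper_rainbow_colouring (e : rel T) (k : nat) (c : T -> T -> nat) : Prop :=
  proper_colouring e k c /\ rainbow_connected e c.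

Definition is_chromatic_index (e : rel T) (k : nat) : Prop :=
  (exists c, proper_colouring e k c) /\
  forall j c, proper_colouring e j c -> k <= j.

Definition is_prc (e : rel T) (k : nat) : Prop :=
  (exists c, proper_rainbow_colouring e k c) /\
  forall j c, proper_rainbow_colouring e j c -> k <= j.

End Graphs.

(* Under the degree condition every proper edge-colouring is already rainbow
   connected, so prc(G) = chi'(G).  Let u, v be distinct vertices.  If they are
   adjacent or have a common neighbour, a path of length at most two is rainbow
   by properness.  Otherwise N(u) and N(v) are disjoint, and the degree bound
   forces every other vertex into exactly one of them; connectivity then yields
   an edge ab with a in N(u) and b in N(v).  If c(ua) <> c(bv), the path uabv is
   rainbow.  If c(ua) = c(bv), the vertex a has at least two neighbours w other
   than u and b (here n >= 9 is used).  A neighbour w of v among them gives the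
   rainbow path uawv; if there is none, they all lie in N(u), and one of them
   satisfies c(uw) <> c(ab), giving the rainbow path uwabv. *)

From mathcomp Require Import all_boot zify.
From Stdlib Require Import Classical.
From Stdlib Require Wf_nat.

Set Implicit Arguments. Unset Strict Implicit. Unset Printing Implicit Defensive.

Section LeastColouring.
Variables (T : finType) (e : rel T).

Lemma proper_colouring_exists : exists k c, proper_colouring e k c.
Proof.
exists (#|T| + #|T|), (fun x y => enum_rank x + enum_rank y); split.
  move=> x y _; split; first exact: addnC.
  by rewrite -addnS leq_add // ltnW.
move=> x y z _ _; apply: contraNN => /eqP/addnI/ord_inj/enum_rank_inj ->.
exact: eqxx.
Qed.

Lemma chromatic_index_exists : exists k, is_chromatic_index e k.
Proof.
have [|//|k [[[c pc] kmin] _]] :=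
  @Wf_nat.dec_inh_nat_subset_has_unique_least_element
    (fun k => exists c, proper_colouring e k c).
- by move=> k; apply: classic.
- exact: proper_colouring_exists.
by exists k; split=> [|j c' pc']; [exists c | apply/leP/kmin; exists c'].
Qed.

Lemma chromatic_index_is_prc k :
  (forall j c, proper_colouring e j c -> rainbow_connected e c) ->
  is_chromatic_index e k -> is_prc e k.
Proof.
move=> rainbow [[c pc] kmin]; split=> [|j c' [pc' _]]; last exact: kmin pc'.
by exists c; split=> //; apply: rainbow pc.
Qed.

End LeastColouring.

Section SimpleGraph.
Variables (T : finType) (e : rel T).
Hypothesis sg : simple_graph e.

Lemma adj_sym x y : e x y = e y x.
Proof. by case: sg. Qed.

Lemma adj_neq x y : e x y -> x != y.
Proof. by case: sg => _ irr; apply: contraTneq => ->; rewrite irr. Qed.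

Lemma connect_exit (A : {set T}) x y :
  connect e x y -> x \in A -> y \notin A ->
  exists x' y', [/\ e x' y', x' \in A & y' \notin A].
Proof.
move=> cxy xA yA.
have [/existsP [x' /existsP [y' /and3P [exy x'A y'A]]] | no_exit] :=
  boolP [exists x', exists y', [&& e x' y', x' \in A & y' \notin A]].
  by exists x', y'.
suff: (x \in A) = (y \in A) by rewrite xA (negbTE yA).
apply: (closed_connect _ cxy) => x1 y1 exy; apply/idP/idP => [x1A | y1A].
  apply: contraNT no_exit => y1A; apply/existsP; exists x1; apply/existsP.
  by exists y1; rewrite exy x1A y1A.
apply: contraNT no_exit => x1A; apply/existsP; exists y1; apply/existsP.
by exists x1; rewrite adj_sym exy y1A x1A.
Qed.

End SimpleGraph.

Section ProperColouring.
Variables (T : finType) (e : rel T) (k : nat) (c : T -> T -> nat).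
Hypotheses (sg : simple_graph e) (pc : proper_colouring e k c).

Lemma colour_sym x y : e x y -> c x y = c y x.
Proof. by case: pc => col _ /col []. Qed.

Lemma colour_neq x y z : e x y -> e x z -> y != z -> c x y != c x z.
Proof. by case: pc => _; apply. Qed.

Lemma colour_consecutive x y z : e x y -> e y z -> x != z -> c x y != c y z.
Proof.
by move=> exy eyz xz; rewrite colour_sym //; apply: colour_neq; rewrite // (adj_sym sg).
Qed.

Lemma colour_neq_end x y z : e x z -> e y z -> x != y -> c x z != c y z.
Proof.
by move=> exz eyz xy; rewrite colour_sym // (colour_sym eyz);
  apply: colour_neq; rewrite // (adj_sym sg).
Qed.

Lemma rainbow_path1 u v : e u v -> rainbow_path e c u v [:: v].
Proof. by move=> euv; rewrite /rainbow_path /= euv eqxx inE (adj_neq sg). Qed.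

Lemma rainbow_path2 u w v :
  e u w -> e w v -> uniq [:: u; w; v] -> rainbow_path e c u v [:: w; v].
Proof.
move=> euw ewv uniq_uwv; move: (uniq_uwv).
rewrite /= !inE negb_or => /andP [/andP [_ uv] _].
by rewrite /rainbow_path uniq_uwv /= euw ewv eqxx inE colour_consecutive.
Qed.

Lemma rainbow_path3 u a b v :
  e u a -> e a b -> e b v -> uniq [:: u; a; b; v] -> c u a != c b v ->
  rainbow_path e c u v [:: a; b; v].
Proof.
move=> eua eab ebv uniq_uabv cuv; move: (uniq_uabv).
rewrite /= !inE !negb_or => /andP [/and3P [_ ub _] /andP [/andP [_ av] _]].
by rewrite /rainbow_path uniq_uabv /= eua eab ebv eqxx !inE !negb_or cuv
  !colour_consecutive.
Qed.

Lemma rainbow_path4 u w a b v :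
  e u w -> e w a -> e a b -> e b v -> uniq [:: u; w; a; b; v] ->
  c u w != c a b -> c u w != c b v -> c w a != c b v ->
  rainbow_path e c u v [:: w; a; b; v].
Proof.
move=> euw ewa eab ebv uniq_path c13 c14 c24; move: (uniq_path).
rewrite /= !inE !negb_or => /andP [/and4P [_ ua _ _]].
move=> /andP [/and3P [_ wb _] /andP [/andP [_ av] _]].
by rewrite /rainbow_path uniq_path /= euw ewa eab ebv eqxx !inE !negb_or
  c13 c14 c24 !colour_consecutive.
Qed.

End ProperColouring.

Section DenseGraph.
Variables (T : finType) (e : rel T).
Hypotheses (sg : simple_graph e) (degH : forall x : T, #|T| - 2 <= 2 * deg e x).

Lemma neighbourhoods_cover u v :
  u != v -> ~~ e u v -> (forall w, e u w -> ~~ e w v) ->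
  forall w, w != u -> w != v -> e u w || e v w.
Proof.
move=> uv nuv no_common w wu wv.
apply/negPn/negP; rewrite negb_or => /andP [nuw nvw].
have disjoint_nbhd : [set y | e u y] :&: [set y | e v y] = set0.
  apply/setP => y; rewrite !inE; apply/negbTE; rewrite negb_and.
  by case euy: (e u y); rewrite //= (adj_sym sg) // no_common.
have irr : irreflexive e by case: sg.
have := max_card (u |: (v |: (w |: ([set y | e u y] :|: [set y | e v y])))).
rewrite !cardsU1 cardsU disjoint_nbhd cards0 !inE !negb_or uv eq_sym wu eq_sym wv.
rewrite (adj_sym sg v u) !irr (negbTE nuv) nuw nvw /=.
have := degH u; have := degH v; rewrite /deg.
by move: #|T| #|[set y | e u y]| #|[set y | e v y]|; lia.
Qed.

Lemma cross_edge u v :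
  u != v -> connect e u v -> ~~ e u v -> (forall w, e u w -> ~~ e w v) ->
  (forall w, w != u -> w != v -> e u w || e v w) ->
  exists a b, [/\ e u a, e a b & e v b].
Proof.
move=> uv conn_uv nuv no_common cover.
have vA : v \notin u |: [set w | e u w] by rewrite !inE negb_or eq_sym uv.
have [x [y [exy]]] := connect_exit sg conn_uv (setU11 _ _) vA.
rewrite !inE negb_or => /orP [/eqP xu | eux] /andP [yu nuy].
  by rewrite -xu exy in nuy.
have [yv | yv] := eqVneq y v.
  by move: (no_common x eux); rewrite -yv exy.
by exists x, y; rewrite eux exy; have := cover y yu yv; rewrite (negbTE nuy).
Qed.

Hypotheses (conn : connected_graph e) (n9 : 9 <= #|T|).

Lemma other_neighbours_gt1 a u b : 1 < #|[set w | e a w] :\ u :\ b|.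
Proof.
have := degH a; rewrite /deg.
have := cardsD1 u [set w | e a w]; have := cardsD1 b ([set w | e a w] :\ u).
move: (u \in _) (b \in _) => [] []; lia.
Qed.

Variables (k : nat) (c : T -> T -> nat).
Hypothesis pc : proper_colouring e k c.

Lemma rainbow_path_via_cross_edge u v a b :
  u != v -> ~~ e u v -> (forall w, e u w -> ~~ e w v) ->
  e u a -> e a b -> e v b -> exists p, rainbow_path e c u v p.
Proof.
move=> uv nuv no_common eua eab evb.
have cover := neighbourhoods_cover uv nuv no_common.
have ua := adj_neq sg eua; have ab := adj_neq sg eab.
have bv : b != v by rewrite eq_sym (adj_neq sg evb).
have ub : u != b by apply: contraTneq evb => <-; rewrite (adj_sym sg).
have av : a != v by apply: contraTneq eua => ->.
have [cuv | cuv] := eqVneq (c u a) (c b v); last first.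
  exists [:: a; b; v]; apply: (rainbow_path3 sg pc); rewrite ?(adj_sym sg b) //.
  by rewrite /= !inE !negb_or ua ub uv ab av bv.
pose S := [set w | e a w] :\ u :\ b.
have inS w : w \in S -> [/\ e a w, w != u, w != b, a != w & w != v].
  rewrite !inE => /and3P [wb wu eaw]; split=> //; first exact: (adj_neq sg eaw).
  by apply: contraTneq eaw => ->; apply: no_common eua.
have [/existsP [w /andP [wS evw]] | /existsPn nv] :=
  boolP [exists w, (w \in S) && e v w].
  have [eaw wu wb aw wv] := inS w wS.
  exists [:: a; w; v]; apply: (rainbow_path3 sg pc); rewrite ?(adj_sym sg w) //.
    by rewrite /= !inE !negb_or ua (eq_sym u w) wu uv aw av wv.
  by rewrite cuv (colour_neq_end sg pc) ?(adj_sym sg _ v) // eq_sym.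
have Su w : w \in S -> e u w.
  move=> wS; have [_ wu _ _ wv] := inS w wS.
  have := cover w wu wv; have := nv w.
  by rewrite wS /= => /negbTE ->; rewrite orbF.
have [w [wS cw]] : exists w, w \in S /\ c u w != c a b.
  have /card_gt1P [w1 [w2 [w1S w2S w12]]] := other_neighbours_gt1 a u b.
  have [cw1 | ] := eqVneq (c u w1) (c a b); last by exists w1.
  by exists w2; split=> //; rewrite -cw1 eq_sym (colour_neq pc) ?Su.
have [eaw wu wb aw wv] := inS w wS.
exists [:: w; a; b; v]; apply: (rainbow_path4 sg pc);
  rewrite ?Su ?(adj_sym sg w) ?(adj_sym sg b) //.
- rewrite /= !inE !negb_or (eq_sym u w) wu ua ub uv.
  by rewrite (eq_sym w a) aw wb wv ab av bv.
- by rewrite -cuv (colour_neq pc (Su w wS) eua) // eq_sym.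
- by rewrite -cuv (colour_neq_end sg pc _ eua wu) // (adj_sym sg).
Qed.

Lemma proper_colouring_rainbow_connected : rainbow_connected e c.
Proof.
move=> u v uv.
have [euv | nuv] := boolP (e u v).
  by exists [:: v]; apply: (rainbow_path1 c sg).
have [/existsP [w /andP [euw ewv]] | /existsPn no_common] :=
  boolP [exists w, e u w && e w v].
  exists [:: w; v]; apply: (rainbow_path2 sg pc) => //.
  by rewrite /= !inE !negb_or uv (adj_neq sg euw) (adj_neq sg ewv).
have {}no_common w : e u w -> ~~ e w v.
  by move=> euw; have := no_common w; rewrite euw.
have [a [b [eua eab evb]]] :=
  cross_edge uv (conn u v) nuv no_common (neighbourhoods_cover uv nuv no_common).
exact: rainbow_path_via_cross_edge eua eab evb.
Qed.

End DenseGraph.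

Theorem proposition5p10 (T : finType) (e : rel T) :
  simple_graph e -> connected_graph e -> 9 <= #|T| ->
  (forall x : T, #|T| - 2 <= 2 * deg e x) ->
  exists k, is_chromatic_index e k /\ is_prc e k.
Proof.
move=> sg conn n9 degH.
have [k chi_k] := chromatic_index_exists e.
exists k; split=> //; apply: chromatic_index_is_prc chi_k => j c pc.
exact: proper_colouring_rainbow_connected pc.
Qed.
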